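(* Let $\kappa>-1$ and let $ds^2_\kappa$ be the Jensen metric on the Stiefel variety $V(n,r)$, i.e. the Riemannian metric whose kinetic energy function on $T^*V(n,r)$ is $$T_\kappa(X,P)=\tfrac12\operatorname{tr}(P^TP)-\left(\tfrac12+\kappa\right)\operatorname{tr}((X^TP)^2).$$ Then the Legendre transformation $TV(n,r)\to T^*V(n,r)$ determined by $ds^2_\kappa$ and its inverse are given by $$P=\dot X-\frac{1+2\kappa}{2+2\kappa}\,XX^T\dot X,\qquad \dot X=P-(1+2\kappa)\,XP^TX,$$ respectively, where $(X,\dot X)$ satisfies $X^TX=\mathbf I_r$, $X^T\dot X+\dot X^TX=0$ and $(X,P)$ satisfies $X^TX=\mathbf I_r$, $X^TP+P^TX=0$.
   Context: $V(n,r)=\{X\in M_{n,r}(\mathbb R): X^TX=\mathbf I_r\}$ is the Stiefel variety. Its tangent bundle is realized as pairs $(X,\dot X)$ of $n\times r$ matrices with $X^TX=\mathbf I_r$, $X^T\dot X+\dot X^TX=0$; its cotangent bundle is realized as pairs $(X,P)$ of $n\times r$ matrices with $X^TX=\mathbf I_r$, $X^TP+P^TX=0$, covectors being paired with tangent vectors by $\operatorname{tr}(P^T\dot X)$ (the restriction of the ambient Euclidean structure of $M_{n,r}(\mathbb R)$). Equivalently, $T_\kappa=\frac12\langle\Phi,\Phi\rangle+\frac12\kappa\langle\Psi,\Psi\rangle$ with $\Phi=PX^T-XP^T$, $\Psi=X^TP-P^TX$ and $\langle\eta_1,\eta_2\rangle=-\frac12\operatorname{tr}(\eta_1\eta_2)$.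 *)

From mathcomp Require Import all_boot all_order all_algebra.
Set Implicit Arguments. Unset Strict Implicit. Unset Printing Implicit Defensive.
Import Order.TTheory GRing.Theory Num.Theory.
Local Open Scope ring_scope.

Section Stiefel.
Variables (R : realFieldType) (n r : nat).

Definition stiefel (X : 'M[R]_(n, r)) : Prop := X^T *m X = 1%:M.

Definition tangent_at (X Xd : 'M[R]_(n, r)) : Prop :=
  X^T *m Xd + Xd^T *m X = 0.

Definition cotangent_at (X P : 'M[R]_(n, r)) : Prop :=
  X^T *m P + P^T *m X = 0.

Definition pairing (P Xd : 'M[R]_(n, r)) : R := \tr (P^T *m Xd).

Definition T_kappa (k : R) (X P : 'M[R]_(n, r)) : R :=
  2^-1 * \tr (P^T *m P) - (2^-1 + k) * \tr ((X^T *m P) *m (X^T *m P)).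

(* The co-metric: the symmetric bilinear form on covectors at X obtained by
   polarization of the quadratic form 2 T_kappa(X, .); equivalently the
   differential of T_kappa(X, .) at P in the direction Q. *)
Definition cometric (k : R) (X P Q : 'M[R]_(n, r)) : R :=
  T_kappa k X (P + Q) - T_kappa k X P - T_kappa k X Q.

(* (X, Xdot) and (X, P) correspond under the Legendre transformation of
   ds^2_kappa: P is a covector at X and Xdot is the fibre derivative of the
   kinetic energy at P, i.e. <Q, Xdot> = dT_kappa(X,.)_P (Q) for all
   covectors Q at X. *)
Definition legendre (k : R) (X Xd P : 'M[R]_(n, r)) : Prop :=
  cotangent_at X P /\
  forall Q, cotangent_at X Q -> pairing Q Xd = cometric k X P Q.

End Stiefel.

(* With B = X^T P, the fibre derivative of T_kappa(X, .) is the "sharp" map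
   P |-> P + (1 + 2 kappa) X B, represented through the trace pairing; the
   pairing is nondegenerate on covectors at X, and sharp P is itself a tangent
   vector, so the Legendre correspondence is exactly Xdot = sharp P.  Since
   X^T (sharp P) = (2 + 2 kappa) X^T P, the map sharp is inverted by
   Xdot |-> Xdot - (1 + 2 kappa)/(2 + 2 kappa) X X^T Xdot whenever kappa <> -1. *)
From mathcomp Require Import all_boot all_order all_algebra.
From mathcomp Require Import ring lra.
Import Order.TTheory GRing.Theory Num.Theory.
Local Open Scope ring_scope.

Lemma mxtrace_trmx_mulC (R : comPzRingType) (m n : nat) (A B : 'M[R]_(m, n)) :
  \tr (A^T *m B) = \tr (B^T *m A).
Proof. by rewrite -mxtrace_tr trmx_mul trmxK. Qed.

Lemma mxtrace_trmx_mul_eq0 (R : realDomainType) (m n : nat) (D : 'M[R]_(m, n)) :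
  \tr (D^T *m D) = 0 -> D = 0.
Proof.
have sqr_entries : \tr (D^T *m D) = \sum_(j < n) \sum_(i < m) D i j ^+ 2.
  by apply: eq_bigr => j _; rewrite mxE; apply: eq_bigr => i _; rewrite mxE expr2.
rewrite sqr_entries => sum0; apply/matrixP => i j; rewrite mxE.
have col0 : \sum_(i < m) D i j ^+ 2 = 0.
  by apply: (psumr_eq0P _ sum0) => // j' _; apply: sumr_ge0 => i' _; apply: sqr_ge0.
have /eqP : D i j ^+ 2 = 0 by apply: (psumr_eq0P _ col0) => // i' _; apply: sqr_ge0.
by rewrite sqrf_eq0 => /eqP.
Qed.

Lemma skew_scale (R : pzRingType) (m : nat) (c : R) (B : 'M[R]_m) :
  B + B^T = 0 -> c *: B + (c *: B)^T = 0.
Proof. by move=> skewB; rewrite linearZ /= -scalerDr skewB scaler0. Qed.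

Section JensenLegendre.
Local Set Implicit Arguments.
Local Unset Strict Implicit.
Variables (R : realFieldType) (n r : nat) (k : R) (X : 'M[R]_(n, r)).
Hypothesis stiefelX : stiefel X.

Lemma cotangent_atP (P : 'M[R]_(n, r)) :
  cotangent_at X P <-> P^T *m X = - (X^T *m P).
Proof.
rewrite /cotangent_at; split => [hP | ->]; last by rewrite subrr.
by apply/eqP; rewrite -addr_eq0 addrC hP.
Qed.

Lemma cotangent_at_skew (P : 'M[R]_(n, r)) :
  cotangent_at X P <-> X^T *m P + (X^T *m P)^T = 0.
Proof. by rewrite /cotangent_at trmx_mul trmxK. Qed.

Lemma cometricE (P Q : 'M[R]_(n, r)) :
  cometric k X P Q = \tr (P^T *m Q) - (1 + 2 * k) * \tr (X^T *m P *m (X^T *m Q)).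
Proof.
rewrite /cometric /T_kappa !linearD /= !mulmxDl !mxtraceD.
rewrite [\tr (Q^T *m P)]mxtrace_trmx_mulC [\tr (X^T *m Q *m (X^T *m P))]mxtrace_mulC.
by field.
Qed.

Definition sharp (P : 'M[R]_(n, r)) := P + (1 + 2 * k) *: (X *m (X^T *m P)).

Definition flat (Xd : 'M[R]_(n, r)) :=
  Xd - ((1 + 2 * k) / (2 + 2 * k)) *: (X *m (X^T *m Xd)).

Lemma pairing_sub_cometric (P Q Xd : 'M[R]_(n, r)) : cotangent_at X P ->
  pairing Q Xd - cometric k X P Q = \tr (Q^T *m (Xd - sharp P)).
Proof.
move=> /cotangent_atP PtX; rewrite cometricE /pairing /sharp.
have -> : \tr (X^T *m P *m (X^T *m Q)) = - \tr (Q^T *m (X *m (X^T *m P))).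
  by rewrite -mxtrace_tr !trmx_mul !trmxK PtX mulmxN linearN /= !mulmxA.
rewrite mulmxBr mulmxDr -scalemxAr linearB linearD /= mxtraceZ.
rewrite [\tr (Q^T *m P)]mxtrace_trmx_mulC; ring.
Qed.

Lemma trmx_mul_sharp (P : 'M[R]_(n, r)) :
  X^T *m sharp P = (2 + 2 * k) *: (X^T *m P).
Proof.
rewrite /sharp mulmxDr -scalemxAr !mulmxA stiefelX mul1mx.
by rewrite -{1}[X^T *m P]scale1r -scalerDl addrA.
Qed.

Lemma cotangent_at_sharp {P : 'M[R]_(n, r)} :
  cotangent_at X P -> cotangent_at X (sharp P).
Proof.
by move=> /cotangent_at_skew hP; apply/cotangent_at_skew; rewrite trmx_mul_sharp;
  apply: skew_scale.
Qed.

(* Nondegeneracy: Q := Xd - sharp P is itself an admissible test covector. *)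
Lemma legendre_sharp (P Xd : 'M[R]_(n, r)) : cotangent_at X P ->
  (tangent_at X Xd /\ legendre k X Xd P) <-> Xd = sharp P.
Proof.
move=> hP; split => [[hXd [_ hL]] | ->].
  have hdiff : cotangent_at X (Xd - sharp P).
    move: hXd (cotangent_at_sharp hP).
    by rewrite /tangent_at /cotangent_at => hXd hS;
      rewrite mulmxBr linearB /= mulmxBl addrACA hXd -opprD hS oppr0 addr0.
  apply/eqP; rewrite -subr_eq0; apply/eqP; apply: mxtrace_trmx_mul_eq0.
  by rewrite -pairing_sub_cometric // hL // subrr.
split; first exact: cotangent_at_sharp.
split=> // Q _; apply/eqP; rewrite -subr_eq0.
by rewrite pairing_sub_cometric // subrr mulmx0 mxtrace0.
Qed.

Hypothesis kappa_neq : 2 + 2 * k != 0.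

Lemma trmx_mul_flat (Xd : 'M[R]_(n, r)) :
  X^T *m flat Xd = (2 + 2 * k)^-1 *: (X^T *m Xd).
Proof.
rewrite /flat mulmxBr -scalemxAr !mulmxA stiefelX mul1mx.
by rewrite -{1}[X^T *m Xd]scale1r -scalerBl; congr (_ *: _); field.
Qed.

Lemma sharpK : cancel sharp flat.
Proof.
move=> P; rewrite /flat trmx_mul_sharp -scalemxAr scalerA /sharp.
by rewrite mulfVK // addrK.
Qed.

Lemma flatK : cancel flat sharp.
Proof.
move=> Xd; rewrite /sharp trmx_mul_flat -scalemxAr scalerA /flat.
by rewrite mulrC subrK.
Qed.

Lemma cotangent_at_flat {Xd : 'M[R]_(n, r)} :
  tangent_at X Xd -> cotangent_at X (flat Xd).
Proof.
by move=> /cotangent_at_skew hXd; apply/cotangent_at_skew; rewrite trmx_mul_flat;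
  apply: skew_scale.
Qed.

End JensenLegendre.

Theorem lemma1 (R : realFieldType) (n r : nat) (k : R) (X : 'M[R]_(n, r)) :
  -1 < k -> stiefel X ->
  (forall Xd, tangent_at X Xd ->
     forall P, legendre k X Xd P <->
       P = Xd - ((1 + 2 * k) / (2 + 2 * k)) *: (X *m X^T *m Xd)) /\
  (forall P, cotangent_at X P ->
     forall Xd, (tangent_at X Xd /\ legendre k X Xd P) <->
       Xd = P - (1 + 2 * k) *: (X *m P^T *m X)).
Proof.
move=> k_gt stiefelX.
have kappa_neq : 2 + 2 * k != 0 by rewrite gt_eqF //; lra.
split=> [Xd hXd P | P hP Xd].
  rewrite -mulmxA -/(flat k X Xd); split=> [hL | ->].
    have /(legendre_sharp k stiefelX) -> := conj hXd hL; last exact: hL.1.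
    by rewrite sharpK.
  by have [_] := (legendre_sharp k stiefelX _ (cotangent_at_flat stiefelX kappa_neq hXd)).2
    (esym (flatK stiefelX kappa_neq Xd)).
rewrite -mulmxA (cotangent_atP X P).1 // mulmxN scalerN opprK.
exact: legendre_sharp.
Qed.
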